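(* Let $X$ be a random element of a subspace $\mathbb{X}\subseteq\mathbb{R}^d$ and $Y\in\{+1,-1\}$ its label, with $\alpha=\Pr(Y=+1)\in(0,1)$. Let $(X',Y')$ be an independent copy of $(X,Y)$. Let $\mathbb{H}$ be a real inner product space, $\mathbb{V}$ a real inner product space, $r>0$, and $\phi:\mathbb{H}\to\mathbb{V}$ a map with $\|\phi(u)\|=r$ for all $u\in\mathbb{H}$. Let $\mathbb{F}_1$ be a set of maps $F_1:\mathbb{X}\to\mathbb{H}$, and let $\mathbb{F}_2$ be the set of functions $f_2:\mathbb{H}\to\mathbb{R}$, $f_2(u)=\langle w,\phi(u)\rangle$, with $w\in\mathbb{V}$, $\|w\|\le 1/r$. For $f_2\in\mathbb{F}_2$, $F_1\in\mathbb{F}_1$ define the risk $$R(f_2\circ F_1,X,Y)=E_{X,Y}\big[-Y\,f_2(F_1(X))\big].$$ Define $$\mathbb{D}=\operatorname*{argmin}_{F_1\in\mathbb{F}_1}E_{X,X'\mid Y\neq Y'}\Big(-\big\|\phi\circ F_1(X)-\phi\circ F_1(X')\big\|^2\Big),$$ $$\mathbb{S}=\Big\{F_1\in\mathbb{F}_1 : \Pr\big(\phi\circ F_1(X)=\phi\circ F_1(X')\mid Y=Y'\big)=\Pr\big(\phi\circ F_1(X)\neq\phi\circ F_1(X')\mid Y\neq Y'\big)=1\Big\},$$ $$\mathbb{F}^\star=\Big\{f_2\circ F_1 : f_2\circ F_1\in\operatorname*{argmin}_{f_2\in\mathbb{F}_2,\,F_1\in\mathbb{F}_1}R(f_2\circ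 F_1,X,Y)\Big\},\qquad \mathbb{F}_1^\star=\{F_1 : \exists f_2,\ f_2\circ F_1\in\mathbb{F}^\star\}.$$ If $\mathbb{D}\cap\mathbb{S}\neq\emptyset$ and $|\operatorname{supp}(\phi\circ F_1(X))|>4$ for every $F_1\in\mathbb{F}_1\setminus\mathbb{S}$, then $\mathbb{F}_1^\star=\mathbb{D}\cap\mathbb{S}$.
   Context: $\operatorname{supp}(Z)$ denotes the support of the random element $Z$, and $|\cdot|$ denotes cardinality. $E_{X,X'\mid Y\neq Y'}$ denotes expectation over the pair $(X,X')$ conditional on $Y\neq Y'$. The loss used is $\ell(\hat y,y)=-y\hat y$ (equivalent to the hinge loss here since $|f_2(F_1(x))|\le 1$). *)

From HB Require Import structures.
From mathcomp Require Import all_boot all_order all_algebra.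
From mathcomp Require Import all_classical all_reals all_analysis.
Set Implicit Arguments. Unset Strict Implicit. Unset Printing Implicit Defensive.
Import Order.TTheory GRing.Theory Num.Theory.
Local Open Scope classical_set_scope.
Local Open Scope ring_scope.

Definition is_inner_product (R : realType) (V : lmodType R) (ip : V -> V -> R) : Prop :=
  [/\ (forall u v, ip u v = ip v u),
      (forall (a : R) u v w, ip (a *: u + v) w = a * ip u w + ip v w),
      (forall v, 0 <= ip v v) &
      (forall v, ip v v = 0 -> v = 0)].

Definition ipnorm (R : realType) (V : lmodType R) (ip : V -> V -> R) (v : V) : R :=
  Num.sqrt (ip v v).

Local Open Scope ereal_scope.

Definition condP d (T : measurableType d) (R : realType)
  (mu : set T -> \bar R) (A B : set T) : \bar R :=
  mu (A `&` B) * ((fine (mu B))^-1)%:E.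

Definition condE d (T : measurableType d) (R : realType)
  (mu : {measure set T -> \bar R}) (B : set T) (f : T -> R) : \bar R :=
  (\int[mu]_(z in B) (f z)%:E) * ((fine (mu B))^-1)%:E.

(* Topological support of the law of a V-valued random element Z
   (w.r.t. the inner-product norm): points all of whose open balls have
   positive probability. *)
Definition ip_support d (T : measurableType d) (R : realType)
  (P : {measure set T -> \bar R}) (V : lmodType R) (ip : V -> V -> R)
  (Z : T -> V) : set V :=
  [set v | forall e : R, (0 < e)%R ->
     0 < P [set t | (ipnorm ip (Z t - v) < e)%R]].

(* |S| > 4 : S contains 5 pairwise distinct points. *)
Definition card_gt4 (V : eqType) (S : set V) : Prop :=
  exists s : seq V, [/\ uniq s, size s = 5%N & [set` s] `<=` S].

Definition F2set (R : realType) (H V : lmodType R) (ip : V -> V -> R)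
  (phi : H -> V) (r : R) : set (H -> R) :=
  [set f2 | exists w : V, (ipnorm ip w <= r^-1)%R /\ f2 = (fun u => ip w (phi u))].

Definition risk d (Omega : measurableType d) (R : realType)
  (P : {measure set Omega -> \bar R}) (n : nat)
  (X : Omega -> 'rV[R]_n) (Y : Omega -> R) (g : 'rV[R]_n -> R) : \bar R :=
  \int[P]_w (- Y w * g (X w))%:E.

Definition Fstar d (Omega : measurableType d) (R : realType)
  (P : {measure set Omega -> \bar R}) (n : nat)
  (X : Omega -> 'rV[R]_n) (Y : Omega -> R)
  (H V : lmodType R) (ip : V -> V -> R) (phi : H -> V) (r : R)
  (F1set : set ('rV[R]_n -> H)) : set ('rV[R]_n -> R) :=
  [set g | (exists f2 F1, [/\ F2set ip phi r f2, F1set F1 & g = f2 \o F1]) /\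
     forall f2' F1', F2set ip phi r f2' -> F1set F1' ->
       risk P X Y g <= risk P X Y (f2' \o F1')].

Definition F1star d (Omega : measurableType d) (R : realType)
  (P : {measure set Omega -> \bar R}) (n : nat)
  (X : Omega -> 'rV[R]_n) (Y : Omega -> R)
  (H V : lmodType R) (ip : V -> V -> R) (phi : H -> V) (r : R)
  (F1set : set ('rV[R]_n -> H)) : set ('rV[R]_n -> H) :=
  [set F1 | F1set F1 /\ exists f2, F2set ip phi r f2 /\
      Fstar P X Y ip phi r F1set (f2 \o F1)].

(* (X,Y) and an independent copy (X',Y') realized on Omega x Omega with
   the product probability P \x P:  X = X \o fst, X' = X \o snd, etc.  *)

Definition sameLab d (Omega : measurableType d) (R : realType)
  (Y : Omega -> R) : set (Omega * Omega) := [set z | Y z.1 = Y z.2].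
Definition diffLab d (Omega : measurableType d) (R : realType)
  (Y : Omega -> R) : set (Omega * Omega) := [set z | Y z.1 <> Y z.2].

Definition Dset d (Omega : measurableType d) (R : realType)
  (P : probability Omega R) (n : nat)
  (X : Omega -> 'rV[R]_n) (Y : Omega -> R)
  (H V : lmodType R) (ip : V -> V -> R) (phi : H -> V)
  (F1set : set ('rV[R]_n -> H)) : set ('rV[R]_n -> H) :=
  let obj F1 := condE (P \x P) (diffLab Y)
       (fun z => - (ipnorm ip (phi (F1 (X z.1)) - phi (F1 (X z.2)))) ^+ 2)%R in
  [set F1 | F1set F1 /\ forall F1', F1set F1' -> obj F1 <= obj F1'].

Definition Sset d (Omega : measurableType d) (R : realType)
  (P : probability Omega R) (n : nat)
  (X : Omega -> 'rV[R]_n) (Y : Omega -> R)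
  (H V : lmodType R) (phi : H -> V)
  (F1set : set ('rV[R]_n -> H)) : set ('rV[R]_n -> H) :=
  [set F1 | F1set F1 /\
     condP (P \x P) [set z | phi (F1 (X z.1)) = phi (F1 (X z.2))] (sameLab Y) = 1 /\
     condP (P \x P) [set z | phi (F1 (X z.1)) <> phi (F1 (X z.2))] (diffLab Y) = 1].

(* Let Z = phi (F1 X), so that |Z| = r, and let alpha = P(Y = 1), beta = 1 - alpha.
   With q(1) = alpha and q(-1) = -beta, expanding the nonnegative quantity
     E[1{Y <> Y'} |q(Y) Z + q(Y') Z' - k v|^2]
   gives, for all v and k,
     4 k E[Y <v, Z>] <= 2 ((alpha - beta)^2 r^2 + k^2 |v|^2) + E[1{Y <> Y'} |Z - Z'|^2],
   with equality iff Z is a.s. equal to cp on {Y = 1} and to cm on {Y = -1}, where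
   alpha cp - beta cm = k v.  The left side is -4k times the risk of u |-> <v, phi u>,
   and the last term is 2 alpha beta E[|Z - Z'|^2 | Y <> Y'], which members of D
   maximize.  A member of S has cp <> cm, so the choice v = w0 proportional to
   alpha cp - beta cm, with |w0| = 1/r, attains equality; for a member of D /\ S this
   makes it a risk minimizer.  Conversely, a risk minimizer must turn every inequality
   of this chain into an equality: it lies in D, its weight has |w| = |w0|, and it is
   class-wise constant with cp <> cm, because cp = cm would force
   k^2 |w|^2 = (alpha - beta)^2 r^2, whereas k^2 |w0|^2 > (alpha - beta)^2 r^2 by
   strict convexity of the norm. *)

From HB Require Import structures.
From mathcomp Require Import all_boot all_order all_algebra.
From mathcomp Require Import all_classical all_reals all_analysis.
From mathcomp Require Import measurable_realfun ring lra.
Set Implicit Arguments. Unset Strict Implicit. Unset Printing Implicit Defensive.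
Import Order.TTheory GRing.Theory Num.Theory.
Local Open Scope classical_set_scope.
Local Open Scope ring_scope.

Section inner_product.
Variables (R : realType) (V : lmodType R) (ip : V -> V -> R).
Hypothesis hip : is_inner_product ip.

Lemma ipC u v : ip u v = ip v u.
Proof. by case: hip. Qed.

Lemma ip_ge0 v : 0 <= ip v v.
Proof. by case: hip. Qed.

Lemma ip_eq0 v : ip v v = 0 -> v = 0.
Proof. by case: hip => _ _ _; apply. Qed.

Lemma ip_linear a u v w : ip (a *: u + v) w = a * ip u w + ip v w.
Proof. by case: hip. Qed.

Lemma ip0l w : ip 0 w = 0.
Proof. by have := ip_linear 1 0 0 w; rewrite scale1r addr0 mul1r; lra. Qed.

Lemma ipDl u v w : ip (u + v) w = ip u w + ip v w.
Proof. by rewrite -[u]scale1r ip_linear mul1r scale1r. Qed.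

Lemma ipZl a u w : ip (a *: u) w = a * ip u w.
Proof. by rewrite -[a *: u]addr0 ip_linear ip0l addr0. Qed.

Lemma ipNl u w : ip (- u) w = - ip u w.
Proof. by rewrite -scaleN1r ipZl mulN1r. Qed.

Lemma ipDr u v w : ip w (u + v) = ip w u + ip w v.
Proof. by rewrite ipC ipDl !(ipC w). Qed.

Lemma ipZr a u w : ip w (a *: u) = a * ip w u.
Proof. by rewrite ipC ipZl ipC. Qed.

Lemma ipNr u w : ip w (- u) = - ip w u.
Proof. by rewrite ipC ipNl ipC. Qed.

Definition ipE := (ipDl, ipDr, ipNl, ipNr, ipZl, ipZr).

Lemma sqr_ipnorm v : ipnorm ip v ^+ 2 = ip v v.
Proof. by rewrite /ipnorm sqr_sqrtr // ip_ge0. Qed.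

Lemma ipnorm_le_inv (r : R) v : 0 < r -> (ipnorm ip v <= r^-1) = (ip v v <= (r ^+ 2)^-1).
Proof.
move=> r0; have ri0 : 0 <= r^-1 by rewrite invr_ge0 ltW.
by rewrite /ipnorm -(ger0_norm ri0) -sqrtr_sqr exprVn ler_sqrt // invr_ge0 exprn_ge0 // ltW.
Qed.

Lemma normr_ip_le u v : `|ip u v| <= (ip u u + ip v v) / 2.
Proof.
have := ip_ge0 (u - v); have := ip_ge0 (u + v).
rewrite !ipE (ipC v u) => h1 h2.
by rewrite ler_norml; apply/andP; split; lra.
Qed.

Lemma ip_subr_gt0 u v : u != v -> 0 < ip (u - v) (u - v).
Proof.
move=> uv; rewrite lt_neqAle ip_ge0 andbT eq_sym.
by apply: contra uv => /eqP/ip_eq0/eqP; rewrite subr_eq0.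
Qed.

(* On the sphere of radius r: |a u - b v|^2 = (a - b)^2 r^2 + a b |u - v|^2. *)
Lemma ip_combination_gt (r a b : R) (u v : V) :
  ip u u = r ^+ 2 -> ip v v = r ^+ 2 -> u != v -> 0 < a -> 0 < b ->
  (a - b) ^+ 2 * r ^+ 2 < ip (a *: u - b *: v) (a *: u - b *: v).
Proof.
move=> hu hv uv a0 b0; have := ip_subr_gt0 uv.
rewrite !ipE hu hv (ipC v u) => h.
have : 0 < a * b by exact: mulr_gt0.
nra.
Qed.

End inner_product.

Section bounded_measurable.
Context d (T : measurableType d) (R : realType).

Definition bounded_mfun (f : T -> R) :=
  measurable_fun setT f /\ exists M : R, forall x, `|f x| <= M.

Lemma bounded_mfun_cst c : bounded_mfun (fun _ => c).
Proof. by split; [exact: measurable_cst | exists `|c|]. Qed.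

Lemma bounded_mfunD f g : bounded_mfun f -> bounded_mfun g ->
  bounded_mfun (fun x => f x + g x).
Proof.
move=> [mf [M1 h1]] [mg [M2 h2]]; split; first exact: measurable_funD.
by exists (M1 + M2) => x; apply: le_trans (ler_normD _ _) _; apply: lerD.
Qed.

Lemma bounded_mfunM f g : bounded_mfun f -> bounded_mfun g ->
  bounded_mfun (fun x => f x * g x).
Proof.
move=> [mf [M1 h1]] [mg [M2 h2]]; split; first exact: measurable_funM.
by exists (M1 * M2) => x; rewrite normrM; apply: ler_pM.
Qed.

Lemma bounded_mfunN f : bounded_mfun f -> bounded_mfun (fun x => - f x).
Proof.
move=> hf; have := bounded_mfunM (bounded_mfun_cst (-1)) hf.
by under eq_fun do rewrite mulN1r.
Qed.

Lemma bounded_mfunB f g : bounded_mfun f -> bounded_mfun g ->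
  bounded_mfun (fun x => f x - g x).
Proof. by move=> hf /bounded_mfunN; exact: bounded_mfunD. Qed.

Lemma integrable_bounded_mfun (mu : {measure set T -> \bar R}) f :
  (mu setT < +oo)%E -> bounded_mfun f -> mu.-integrable setT (EFin \o f).
Proof.
move=> fin [mf [M fM]]; apply: measurable_bounded_integrable => //.
exists M; split; first exact: num_real.
by move=> y My x _; apply: le_trans (ltW My).
Qed.

Lemma Rintegral_EFin (mu : {measure set T -> \bar R}) f :
  mu.-integrable setT (EFin \o f) -> (\int[mu]_x (f x)%:E)%E = (\int[mu]_x f x)%:E.
Proof. by move=> h; rewrite fineK // integrable_fin_num. Qed.

End bounded_measurable.
Arguments bounded_mfun_cst {d T R}.

Lemma bounded_mfun_comp d1 d2 (T1 : measurableType d1) (T2 : measurableType d2)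
  (R : realType) (g : T1 -> T2) (f : T2 -> R) :
  measurable_fun setT g -> bounded_mfun f -> bounded_mfun (f \o g).
Proof. by move=> mg [mf [M hM]]; split; [exact: measurableT_comp | exists M => x; exact: hM]. Qed.

Ltac bounded_mfun_tac := repeat first [exact: bounded_mfun_cst | apply: bounded_mfunB
  | apply: bounded_mfunM | apply: bounded_mfunD | apply: bounded_mfunN].

Section null_sets.
Local Open Scope ereal_scope.
Context d (T : measurableType d) (R : realType) (mu : {measure set T -> \bar R}).

Lemma integral_eq0_null (g : T -> \bar R) : (forall x, 0 <= g x) ->
  measurable_fun setT g -> \int[mu]_x g x = 0 ->
  exists N, [/\ measurable N, mu N = 0 & forall x, g x != 0 -> N x].
Proof.
move=> g0 mg ig.
have : \int[mu]_(x in setT) `|g x| = 0.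
  by rewrite -ig; apply: eq_integral => x _; rewrite gee0_abs.
move/(ae_eq_integral_abs mu measurableT mg) => [N [mN N0 sN]].
by exists N; split => // x gx; apply: sN => /(_ I) gx0; rewrite gx0 eqxx in gx.
Qed.

Lemma integral_eq0_witness (g : T -> \bar R) (A N : set T) : (forall x, 0 <= g x) ->
  measurable_fun setT g -> \int[mu]_x g x = 0 ->
  measurable A -> 0 < mu A -> measurable N -> mu N = 0 ->
  exists x, [/\ A x, ~ N x & g x = 0].
Proof.
move=> g0 mg ig mA A0 mN N0; have [N' [mN' N'0 gN']] := integral_eq0_null g0 mg ig.
apply: contrapT => nx.
have AN : A `<=` N `|` N'.
  move=> x Ax; have [Nx|Nx] := pselect (N x); first by left.
  by right; apply: gN'; apply/eqP => gx; apply: nx; exists x.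
have : mu A <= mu (N `|` N') by rewrite le_measure ?inE //; exact: measurableU.
by rewrite null_set_setU // leNgt A0.
Qed.

Lemma Rintegral_eq0_off_null (f : T -> R) (M : set T) : mu setT < +oo ->
  bounded_mfun f -> measurable M -> mu M = 0 -> (forall z, ~ M z -> f z = 0%R) ->
  (\int[mu]_z f z)%R = 0%R.
Proof.
move=> fin hf mM M0 fM.
rewrite /Rintegral (negligible_integral mM measurableT (integrable_bounded_mfun fin hf) M0).
rewrite (eq_integral (fun _ => 0)) ?integral0 // => z.
by rewrite inE => -[_ nM] /=; rewrite fM.
Qed.

Lemma condP_eq1 (A B M : set T) (x : R) : measurable A -> measurable B ->
  measurable M -> mu M = 0 -> B `<=` A `|` M -> mu B = x%:E -> x != 0%R ->
  condP mu A B = 1.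
Proof.
move=> mA mB mM M0 BAM Bx x0.
have mAB : measurable (A `&` B) by exact: measurableI.
have AB_B : mu (A `&` B) = mu B.
  apply/eqP; rewrite eq_le measureIr //=.
  rewrite -(measureU0 mAB mM M0) le_measure ?inE //; first exact: measurableU.
  by move=> z Bz; case: (BAM z Bz) => h; [left | right].
by rewrite /condP AB_B Bx /= -EFinM mulfV.
Qed.

Lemma condP_eq0 (A B M : set T) : measurable A -> measurable B ->
  measurable M -> mu M = 0 -> A `&` B `<=` M -> condP mu A B = 0.
Proof.
move=> mA mB mM M0 ABM.
by rewrite /condP (subset_measure0 (measurableI _ _ mA mB) mM ABM M0) mul0e.
Qed.

Lemma condP_eq1_null (A B : set T) (x : R) : measurable A -> measurable B ->
  mu B = x%:E -> x != 0%R -> condP mu A B = 1 -> mu (B `\` A) = 0.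
Proof.
move=> mA mB Bx x0; rewrite /condP Bx /= => h.
have AB : mu (A `&` B) = x%:E.
  by rewrite -[LHS]mule1 -(mulVf x0) EFinM muleA h mul1e.
have Bfin : mu B < +oo by rewrite Bx ltry.
apply: etrans (measureD mB mA Bfin) _; change (mu B - mu (B `&` A) = 0).
by rewrite setIC AB Bx -EFinB subrr.
Qed.

End null_sets.

Section probability_facts.
Context d (T : measurableType d) (R : realType) (P : probability T R).

Lemma probability_setT_lty : (P setT < +oo)%E.
Proof. by rewrite probability_setT ltry. Qed.

Lemma Rintegral_prob_cst c : \int[P]_x c = c.
Proof.
rewrite Rintegral_cst // [fine _](_ : _ = 1) ?mulr1 //.
exact: (congr1 fine (probability_setT P)).
Qed.

Lemma Rintegral_comb (f g : T -> R) c1 c2 : bounded_mfun f -> bounded_mfun g ->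
  \int[P]_x (c1 * f x + c2 * g x) = c1 * \int[P]_x f x + c2 * \int[P]_x g x.
Proof.
move=> hf hg; have fin := probability_setT_lty.
rewrite RintegralD ?RintegralZl //;
  by apply: integrable_bounded_mfun => //; bounded_mfun_tac.
Qed.

End probability_facts.

Section product_null.
Local Open Scope ereal_scope.
Context d (T : measurableType d) (R : realType) (P : probability T R).

Lemma notin_null_sides (N : set T) (z : T * T) :
  ~ (N `*` setT `|` setT `*` N) z -> ~ N z.1 /\ ~ N z.2.
Proof. by move=> nz; split => h; apply: nz; [left | right]. Qed.

Lemma measurable_null_sides (N : set T) : measurable N ->
  measurable (N `*` setT `|` setT `*` N).
Proof. by move=> mN; apply: measurableU; apply: measurableX. Qed.

Lemma prod_null_sides (N : set T) : measurable N -> P N = 0 ->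
  (P \x P) (N `*` setT `|` setT `*` N) = 0.
Proof.
move=> mN N0.
have l0 : (P \x P) (N `*` setT) = 0 by rewrite product_measure1E // [X in X * _]N0 mul0e.
have r0 : (P \x P) (setT `*` N) = 0 by rewrite product_measure1E // [X in _ * X]N0 mule0.
by apply: null_set_setU => //; apply: measurableX.
Qed.

End product_null.

Lemma eqN11 (R : realFieldType) : (-1 == 1 :> R) = false.
Proof. by apply/eqP; lra. Qed.

Section labels.
Context (R : realType) (d : measure_display) (Omega : measurableType d)
  (P : probability Omega R) (Y : Omega -> R).
Hypothesis Ypm : forall w, Y w = 1 \/ Y w = -1.
Hypothesis mY : measurable_fun setT Y.
Hypothesis Ha : (0 < P [set w | Y w = 1%R] < 1)%E.

Definition alpha := fine (P [set w | Y w = 1]).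
Local Notation beta := (1 - alpha).

Lemma measurable_Yeq (c : R) : measurable [set w | Y w = c].
Proof.
rewrite (_ : [set w | Y w = c] = Y @^-1` [set c]) //.
by rewrite -[X in measurable X]setTI; apply: mY => //; exact: measurable_set1.
Qed.

Lemma prob_Y1 : P [set w | Y w = 1] = alpha%:E.
Proof.
rewrite /alpha fineK // ge0_fin_numE ?measure_ge0 //.
by case/andP: Ha => _ h; apply: lt_trans h _; rewrite ltry.
Qed.

Lemma alpha_gt0 : 0 < alpha.
Proof. by case/andP: Ha; rewrite prob_Y1 lte_fin. Qed.

Lemma alpha_lt1 : alpha < 1.
Proof. by case/andP: Ha; rewrite prob_Y1 lte_fin. Qed.

Lemma beta_gt0 : 0 < beta.
Proof. by rewrite subr_gt0 alpha_lt1. Qed.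

Lemma alpha_beta_gt0 : 0 < alpha * beta.
Proof. exact: mulr_gt0 alpha_gt0 beta_gt0. Qed.

Lemma prob_Yn1 : P [set w | Y w = -1] = beta%:E.
Proof.
have -> : [set w | Y w = -1] = ~` [set w | Y w = 1].
  apply/seteqP; split => w /=; first by move=> ->; lra.
  by case: (Ypm w).
by rewrite probability_setC ?prob_Y1 //; exact: measurable_Yeq.
Qed.

Lemma bounded_mfunY : bounded_mfun Y.
Proof. by split => //; exists 1 => w; case: (Ypm w) => ->; rewrite ?normrN normr1. Qed.




Lemma Rintegral_Y : \int[P]_x Y x = alpha - beta.
Proof.
have bI : bounded_mfun (fun w => \1_[set w | Y w = 1] w : R).
  split; first by apply: measurable_indic; exact: measurable_Yeq.
  by exists 1 => x; rewrite indicE; case: (_ \in _); rewrite ?normr1 ?normr0.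
rewrite (@eq_Rintegral _ _ _ P setT (fun x => 2 * \1_[set w | Y w = 1] x + (-1) * 1));
  last first.
  move=> w _; rewrite indicE; case: (Ypm w) => e.
    by rewrite mem_set /= e //; lra.
  by rewrite memNset /= e => [|h]; lra.
rewrite Rintegral_comb ?Rintegral_prob_cst //; last exact: bounded_mfun_cst.
rewrite /Rintegral integral_indic //= ?setIT; last exact: measurable_Yeq.
by rewrite -/alpha; lra.
Qed.



(* The indicator of {Y <> Y'}, written polynomially in the labels. *)
Definition diffY (z : Omega * Omega) := (1 - Y z.1 * Y z.2) / 2.

Lemma diffY01 z : diffY z = 1 \/ diffY z = 0.
Proof.
by rewrite /diffY; case: (Ypm z.1) => ->; case: (Ypm z.2) => ->; [right|left|left|right]; field.
Qed.

Lemma diffLabE z : diffLab Y z <-> diffY z = 1.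
Proof.
rewrite /diffLab /diffY /=; case: (Ypm z.1) => ->; case: (Ypm z.2) => ->;
  split => h; first [by exfalso; apply: h | by field | by exfalso; lra | lra].
Qed.

Lemma sameLabE z : sameLab Y z <-> diffY z = 0.
Proof.
rewrite /sameLab /diffY /=; case: (Ypm z.1) => ->; case: (Ypm z.2) => ->;
  split => h; first [by field | by exfalso; lra | lra].
Qed.

Lemma bounded_mfun_diffY : bounded_mfun diffY.
Proof.
have := bounded_mfun_comp measurable_fst bounded_mfunY.
have := bounded_mfun_comp measurable_snd bounded_mfunY.
by rewrite /diffY => h2 h1; bounded_mfun_tac.
Qed.

Lemma measurable_diffLab : measurable (diffLab Y).
Proof.
rewrite (_ : diffLab Y = diffY @^-1` [set 1]); last first.
  by apply/seteqP; split => z /=; rewrite diffLabE.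
rewrite -[X in measurable X]setTI.
by apply: bounded_mfun_diffY.1 => //; exact: measurable_set1.
Qed.

Lemma sameLabC : sameLab Y = ~` diffLab Y.
Proof. by apply/seteqP; split => z /=; [move=> e /(_ e) | exact: contrapT]. Qed.

Lemma measurable_sameLab : measurable (sameLab Y).
Proof. by rewrite sameLabC; apply: measurableC; exact: measurable_diffLab. Qed.

Lemma Rintegral_diffY_section (x : Omega) (c : R) :
  \int[P]_y ((1 - Y x * Y y) / 2 * c) = c * ((1 - Y x * (alpha - beta)) / 2).
Proof.
rewrite (@eq_Rintegral _ _ _ P setT (fun y => c / 2 * 1 + - (Y x * c) / 2 * Y y));
  last by move=> y _; ring.
rewrite Rintegral_comb ?Rintegral_prob_cst ?Rintegral_Y; first ring.
  exact: bounded_mfun_cst.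
exact: bounded_mfunY.
Qed.

Lemma Rintegral_diffY_fst (h : Omega -> R) : bounded_mfun h ->
  \int[(P \x P)%E]_z (diffY z * h z.1) = \int[P]_x (h x * ((1 - Y x * (alpha - beta)) / 2)).
Proof.
move=> hh; rewrite /Rintegral -integral12_prod_meas1; last first.
  apply: integrable_bounded_mfun (probability_setT_lty (P \x P)%E) _.
  by apply: bounded_mfunM bounded_mfun_diffY (bounded_mfun_comp measurable_fst hh).
congr fine; apply: eq_integral => x _; rewrite /fubini_F /= /diffY /=.
rewrite Rintegral_EFin ?Rintegral_diffY_section //.
apply: integrable_bounded_mfun (probability_setT_lty P) _.
by bounded_mfun_tac; exact: bounded_mfunY.
Qed.

Lemma Rintegral_diffY_snd (h : Omega -> R) : bounded_mfun h ->
  \int[(P \x P)%E]_z (diffY z * h z.2) = \int[P]_x (h x * ((1 - Y x * (alpha - beta)) / 2)).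
Proof.
move=> hh; rewrite /Rintegral -integral21_prod_meas1; last first.
  apply: integrable_bounded_mfun (probability_setT_lty (P \x P)%E) _.
  by apply: bounded_mfunM bounded_mfun_diffY (bounded_mfun_comp measurable_snd hh).
congr fine; apply: eq_integral => y _; rewrite /fubini_G /= /diffY /=.
rewrite Rintegral_EFin.
  rewrite -Rintegral_diffY_section.
  by congr EFin; apply: eq_Rintegral => x _; rewrite (mulrC (Y x)).
apply: integrable_bounded_mfun (probability_setT_lty P) _.
by bounded_mfun_tac; exact: bounded_mfunY.
Qed.

Lemma Rintegral_diffY : \int[(P \x P)%E]_z diffY z = 2 * alpha * beta.
Proof.
rewrite (@eq_Rintegral _ _ _ (P \x P)%E setT (fun z => diffY z * (fun _ => 1) z.1));
  last by move=> z _; rewrite mulr1.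
rewrite (Rintegral_diffY_fst (bounded_mfun_cst 1)).
rewrite (@eq_Rintegral _ _ _ P setT (fun x => 1 / 2 * 1 + - (alpha - beta) / 2 * Y x));
  last by move=> x _; field.
rewrite Rintegral_comb ?Rintegral_prob_cst ?Rintegral_Y.
- by field.
- exact: bounded_mfun_cst.
- exact: bounded_mfunY.
Qed.

Lemma integral_diffLab (g : Omega * Omega -> R) : bounded_mfun g ->
  (\int[(P \x P)%E]_(z in diffLab Y) (g z)%:E = (\int[(P \x P)%E]_z (diffY z * g z))%:E)%E.
Proof.
move=> hg; rewrite integral_mkcond -Rintegral_EFin; last first.
  apply: integrable_bounded_mfun (probability_setT_lty (P \x P)%E) _.
  exact: bounded_mfunM bounded_mfun_diffY hg.
apply: eq_integral => z _; rewrite patchE.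
case: (diffY01 z) => e.
  by rewrite mem_set ?e ?mul1r //; apply/diffLabE.
by rewrite memNset ?e ?mul0r // => /diffLabE; rewrite e => /eqP; rewrite eq_sym oner_eq0.
Qed.

Lemma prod_diffLab : (P \x P)%E (diffLab Y) = (2 * alpha * beta)%:E.
Proof.
rewrite -[diffLab Y]setIT -integral_indic //; last exact: measurable_diffLab.
rewrite (eq_integral (fun z => (diffY z)%:E)); last first.
  move=> z _; rewrite indicE; case: (diffY01 z) => e; rewrite e.
    by rewrite mem_set //; apply/diffLabE.
  by rewrite memNset // => /diffLabE; rewrite e => /eqP; rewrite eq_sym oner_eq0.
rewrite Rintegral_EFin ?Rintegral_diffY //.
exact: integrable_bounded_mfun (probability_setT_lty (P \x P)%E) bounded_mfun_diffY.
Qed.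

Lemma prod_sameLab : (P \x P)%E (sameLab Y) = (1 - 2 * alpha * beta)%:E.
Proof.
rewrite sameLabC probability_setC; last exact: measurable_diffLab.
by rewrite EFinB -prod_diffLab.
Qed.

Lemma sameLab_mass_gt0 : 0 < 1 - 2 * alpha * beta.
Proof. by have := alpha_gt0; have := alpha_lt1; nra. Qed.

Lemma prob_Y1_gt0 : (0 < P [set w | Y w = 1%R])%E.
Proof. by case/andP: Ha. Qed.

Lemma prob_Yn1_gt0 : (0 < P [set w | Y w = (-1)%R])%E.
Proof. by rewrite prob_Yn1 lte_fin beta_gt0. Qed.

End labels.

Section representation.
Context (R : realType) (d : measure_display) (Omega : measurableType d)
  (P : probability Omega R) (Y : Omega -> R).
Hypothesis Ypm : forall w, Y w = 1 \/ Y w = -1.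
Hypothesis mY : measurable_fun setT Y.
Hypothesis Ha : (0 < P [set w | Y w = 1%R] < 1)%E.
Context (V : lmodType R) (ip : V -> V -> R).
Hypothesis hip : is_inner_product ip.
Context (r : R) (Z : Omega -> V).
Hypothesis Zn : forall w, ip (Z w) (Z w) = r ^+ 2.
Hypothesis mZ : forall v, measurable_fun setT (fun w => ip v (Z w)).
Hypothesis mZZ : measurable_fun setT (fun z : Omega * Omega => ip (Z z.1) (Z z.2)).

Local Notation alpha := (alpha P Y).
Local Notation beta := (1 - alpha).
Local Notation diffY := (diffY Y).

Definition corr v := \int[P]_x (Y x * ip v (Z x)).
Definition sqdist (z : Omega * Omega) := ip (Z z.1 - Z z.2) (Z z.1 - Z z.2).
Definition spread := \int[(P \x P)%E]_z (diffY z * sqdist z).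

(* [coefY] is alpha on {Y = 1} and -beta on {Y = -1}. *)
Definition coefY w := (Y w + alpha - beta) / 2.
Definition resid v k (z : Omega * Omega) := coefY z.1 *: Z z.1 + coefY z.2 *: Z z.2 - k *: v.
Definition defect v k z := diffY z * ip (resid v k z) (resid v k z).

Lemma bounded_mfun_ipZ v : bounded_mfun (fun w => ip v (Z w)).
Proof.
split; first exact: mZ.
by exists ((ip v v + r ^+ 2) / 2) => w; rewrite -(Zn w); exact: normr_ip_le.
Qed.

Lemma sqdistE z : sqdist z = 2 * r ^+ 2 - 2 * ip (Z z.1) (Z z.2).
Proof. by rewrite /sqdist !(ipE hip) !Zn (ipC hip (Z z.2)); ring. Qed.

Lemma bounded_mfun_sqdist : bounded_mfun sqdist.
Proof.
have -> : sqdist = (fun z => 2 * r ^+ 2 - 2 * ip (Z z.1) (Z z.2)).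
  by apply: funext => z; rewrite sqdistE.
have bZZ : bounded_mfun (fun z : Omega * Omega => ip (Z z.1) (Z z.2)).
  split => //; exists (r ^+ 2) => z; apply: le_trans (normr_ip_le hip _ _) _.
  by rewrite !Zn; lra.
by bounded_mfun_tac.
Qed.

Lemma bounded_mfun_coefY_ipZ v : bounded_mfun (fun w => coefY w * ip v (Z w)).
Proof.
by apply: bounded_mfunM (bounded_mfun_ipZ v); rewrite /coefY;
  bounded_mfun_tac; exact: bounded_mfunY.
Qed.

Lemma coefY_diffY w : coefY w * ((1 - Y w * (alpha - beta)) / 2) = alpha * beta * Y w.
Proof. by rewrite /coefY; case: (Ypm w) => ->; field. Qed.

Lemma defectE v k : defect v k = (fun z =>
  diffY z * ((alpha - beta) ^+ 2 * r ^+ 2 + k ^+ 2 * ip v v)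
  + alpha * beta * (diffY z * sqdist z)
  - 2 * k * (diffY z * (coefY z.1 * ip v (Z z.1)))
  - 2 * k * (diffY z * (coefY z.2 * ip v (Z z.2)))).
Proof.
apply: funext => z; rewrite /defect /resid sqdistE /diffY !(ipE hip) !Zn.
rewrite (ipC hip (Z z.2) (Z z.1)) (ipC hip (Z z.1) v) (ipC hip (Z z.2) v).
by rewrite /coefY; case: (Ypm z.1) => ->; case: (Ypm z.2) => ->; field.
Qed.

Lemma bounded_mfun_defect_terms v :
  [/\ bounded_mfun diffY, bounded_mfun (fun z => diffY z * sqdist z),
    bounded_mfun (fun z => diffY z * (coefY z.1 * ip v (Z z.1))) &
    bounded_mfun (fun z => diffY z * (coefY z.2 * ip v (Z z.2)))].
Proof.
have bd := bounded_mfun_diffY Ypm mY.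
split => //; apply: bounded_mfunM bd _; first exact: bounded_mfun_sqdist.
  exact: bounded_mfun_comp measurable_fst (bounded_mfun_coefY_ipZ v).
exact: bounded_mfun_comp measurable_snd (bounded_mfun_coefY_ipZ v).
Qed.

Lemma bounded_mfun_defect v k : bounded_mfun (defect v k).
Proof.
have [b0 b1 b2 b3] := bounded_mfun_defect_terms v; rewrite defectE.
apply: bounded_mfunB; last exact: bounded_mfunM (bounded_mfun_cst _) b3.
apply: bounded_mfunB; last exact: bounded_mfunM (bounded_mfun_cst _) b2.
apply: bounded_mfunD; last exact: bounded_mfunM (bounded_mfun_cst _) b1.
exact: bounded_mfunM b0 (bounded_mfun_cst _).
Qed.

Lemma defect_ge0 v k z : 0 <= defect v k z.
Proof. by apply: mulr_ge0; [case: (diffY01 Ypm z) => -> | exact: ip_ge0]. Qed.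

Lemma Rintegral_coefY_ipZ v :
  \int[P]_x (coefY x * ip v (Z x) * ((1 - Y x * (alpha - beta)) / 2)) =
  alpha * beta * corr v.
Proof.
rewrite -RintegralZl //; last first.
  apply: integrable_bounded_mfun (probability_setT_lty P) _.
  exact: bounded_mfunM (bounded_mfunY Ypm mY) (bounded_mfun_ipZ v).
by apply: eq_Rintegral => x _; rewrite mulrAC coefY_diffY mulrA.
Qed.

(* The key identity: the left-hand side is nonnegative, and vanishes exactly
   when [Z] is a.s. constant on each class with [alpha cp - beta cm = k v]. *)
Lemma Rintegral_defect v k : \int[(P \x P)%E]_z defect v k z =
  alpha * beta * (2 * ((alpha - beta) ^+ 2 * r ^+ 2 + k ^+ 2 * ip v v) + spread
                  - 4 * k * corr v).
Proof.
have fin := probability_setT_lty (P \x P)%E.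
have [b0 b1 b2 b3] := bounded_mfun_defect_terms v.
have int f := @integrable_bounded_mfun _ _ _ _ f fin.
rewrite defectE RintegralB //; first rewrite RintegralB //; first rewrite RintegralD //;
  first rewrite RintegralZr //; first rewrite !RintegralZl //.
all: try (apply: int; repeat first [exact: b0 | exact: b1 | exact: b2 | exact: b3
    | exact: bounded_mfun_cst | apply: bounded_mfunB | apply: bounded_mfunM
    | apply: bounded_mfunD]).
rewrite (Rintegral_diffY P Ypm mY) -/spread.
rewrite (Rintegral_diffY_fst P Ypm mY (bounded_mfun_coefY_ipZ v)).
rewrite (Rintegral_diffY_snd P Ypm mY (bounded_mfun_coefY_ipZ v)).
by rewrite Rintegral_coefY_ipZ; ring.
Qed.

Lemma condE_neg_sqdist :
  condE (P \x P)%E (diffLab Y) (fun z => - ipnorm ip (Z z.1 - Z z.2) ^+ 2)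
  = (- spread / (2 * alpha * beta))%:E.
Proof.
have hg : bounded_mfun (fun z => - sqdist z) by exact/bounded_mfunN/bounded_mfun_sqdist.
rewrite /condE [fine _](congr1 fine (prod_diffLab P Ypm mY)) /=.
under eq_integral do rewrite (sqr_ipnorm hip).
rewrite (integral_diffLab P Ypm mY hg) -EFinM.
congr EFin; congr (_ / _); rewrite /spread -mulN1r -RintegralZl //.
  by apply: eq_Rintegral => z _; ring.
apply: integrable_bounded_mfun (probability_setT_lty (P \x P)%E) _.
exact: bounded_mfunM (bounded_mfun_diffY Ypm mY) bounded_mfun_sqdist.
Qed.

Lemma risk_corr v : (\int[P]_x (- Y x * ip v (Z x))%:E = (- corr v)%:E)%E.
Proof.
have b : bounded_mfun (fun x => Y x * ip v (Z x)).
  exact: bounded_mfunM (bounded_mfunY Ypm mY) (bounded_mfun_ipZ v).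
have fin := probability_setT_lty P.
rewrite Rintegral_EFin; last first.
  apply: integrable_bounded_mfun fin _.
  by under eq_fun do rewrite mulNr; exact: bounded_mfunN.
rewrite /corr -mulN1r -RintegralZl //; last exact: integrable_bounded_mfun fin b.
by congr EFin; apply: eq_Rintegral => x _; ring.
Qed.

Lemma eqZE z : Z z.1 = Z z.2 <-> sqdist z = 0.
Proof.
split; first by rewrite /sqdist => ->; rewrite subrr (ip0l hip).
by move/(ip_eq0 hip)/eqP; rewrite subr_eq0 => /eqP.
Qed.

Lemma measurable_eqZ : measurable [set z : Omega * Omega | Z z.1 = Z z.2].
Proof.
rewrite (_ : [set z | Z z.1 = Z z.2] = sqdist @^-1` [set 0]); last first.
  by apply/seteqP; split => z /=; rewrite eqZE.
rewrite -[X in measurable X]setTI.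
by apply: bounded_mfun_sqdist.1 => //; exact: measurable_set1.
Qed.

Lemma measurable_neqZ : measurable [set z : Omega * Omega | Z z.1 <> Z z.2].
Proof. exact: measurableC measurable_eqZ. Qed.

Definition classY (cp cm : V) w := if Y w == 1 then cp else cm.

Definition ae_classY cp cm := exists N, [/\ measurable N, P N = 0%E &
  forall w, ~ N w -> Z w = classY cp cm w].

Lemma classY_eq cp cm z : Y z.1 = Y z.2 -> classY cp cm z.1 = classY cp cm z.2.
Proof. by rewrite /classY => ->. Qed.

Lemma classY_neq cp cm z : cp != cm -> Y z.1 <> Y z.2 ->
  classY cp cm z.1 <> classY cp cm z.2.
Proof.
rewrite /classY => /eqP cpm; case: (Ypm z.1) => ->; case: (Ypm z.2) => -> //.
  by rewrite eqxx eqN11.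
by rewrite eqxx eqN11 => _ /esym.
Qed.

Lemma condP_eqZ_sameLab cp cm : ae_classY cp cm ->
  condP (P \x P)%E [set z | Z z.1 = Z z.2] (sameLab Y) = 1%E.
Proof.
move=> [N [mN N0 ZN]].
apply: (condP_eq1 _ _ (measurable_null_sides mN) (prod_null_sides mN N0) _
  (prod_sameLab P Ypm mY)).
- exact: measurable_eqZ.
- exact: measurable_sameLab Ypm mY.
- move=> z Yz; have [|nz] := pselect ((N `*` setT `|` setT `*` N) z); first by right.
  have [n1 n2] := notin_null_sides nz.
  by left; rewrite /= !ZN //; exact: classY_eq.
- by rewrite gt_eqF // (sameLab_mass_gt0 Ha).
Qed.

Lemma condP_neqZ_diffLab cp cm : ae_classY cp cm -> cp != cm ->
  condP (P \x P)%E [set z | Z z.1 <> Z z.2] (diffLab Y) = 1%E.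
Proof.
move=> [N [mN N0 ZN]] cpm.
apply: (condP_eq1 _ _ (measurable_null_sides mN) (prod_null_sides mN N0) _
  (prod_diffLab P Ypm mY)).
- exact: measurable_neqZ.
- exact: measurable_diffLab Ypm mY.
- move=> z Yz; have [|nz] := pselect ((N `*` setT `|` setT `*` N) z); first by right.
  have [n1 n2] := notin_null_sides nz.
  by left; rewrite /= !ZN //; exact: classY_neq.
- by rewrite -mulrA gt_eqF // mulr_gt0 // (alpha_beta_gt0 Ha).
Qed.

Lemma condP_neqZ_diffLab_cst c : ae_classY c c ->
  condP (P \x P)%E [set z | Z z.1 <> Z z.2] (diffLab Y) = 0%E.
Proof.
move=> [N [mN N0 ZN]].
apply: (condP_eq0 _ _ (measurable_null_sides mN) (prod_null_sides mN N0)).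
- exact: measurable_neqZ.
- exact: measurable_diffLab Ypm mY.
- move=> z [/= Zz _]; apply: contrapT => nz; have [n1 n2] := notin_null_sides nz.
  by apply: Zz; rewrite !ZN // /classY; case: ifP; case: ifP.
Qed.

Lemma ae_classY_of_condP_eqZ :
  condP (P \x P)%E [set z | Z z.1 = Z z.2] (sameLab Y) = 1%E ->
  exists cp cm, [/\ ae_classY cp cm, ip cp cp = r ^+ 2 & ip cm cm = r ^+ 2].
Proof.
move=> hS; set B := sameLab Y `\` [set z | Z z.1 = Z z.2].
have mB : measurable B by apply: measurableD; [exact: measurable_sameLab | exact: measurable_eqZ].
have B0 : (P \x P)%E B = 0%E.
  apply: condP_eq1_null hS; [exact: measurable_eqZ | exact: measurable_sameLab |
    exact: prod_sameLab | by rewrite gt_eqF // (sameLab_mass_gt0 Ha)].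
(* Tonelli: almost every section of the null set [B] is null. *)
have iB : (\int[P]_x (P \o xsection B) x = 0)%E := B0.
have g0 x : (0 <= (P \o xsection B) x)%E by exact: measure_ge0.
have mg := measurable_fun_xsection P mB.
have [wp [Ywp _ Bwp]] := integral_eq0_witness g0 mg iB (measurable_Yeq mY 1)
  (prob_Y1_gt0 Ha) measurable0 (measure0 P).
have [wm [Ywm _ Bwm]] := integral_eq0_witness g0 mg iB (measurable_Yeq mY (-1))
  (prob_Yn1_gt0 Ypm mY Ha) measurable0 (measure0 P).
exists (Z wp), (Z wm); split; last 2 first; [exact: Zn | exact: Zn |].
exists (xsection B wp `|` xsection B wm); split.
- by apply: measurableU; apply: measurable_xsection.
- by apply: null_set_setU => //; apply: measurable_xsection.
- move=> w nN; rewrite /classY; apply: contrapT => hne; apply: nN.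
  case: (Ypm w) => Yw; rewrite Yw ?eqxx in hne; [left | right];
    rewrite /xsection /= inE /B /=; split; rewrite /sameLab /= ?Ywp ?Ywm ?Yw //.
  + by move=> h; apply: hne; rewrite h.
  + by move=> h; apply: hne; rewrite eqN11 h.
Qed.

Lemma coefY1 w : Y w = 1 -> coefY w = alpha.
Proof. by rewrite /coefY => ->; field. Qed.

Lemma coefYN1 w : Y w = -1 -> coefY w = - beta.
Proof. by rewrite /coefY => ->; field. Qed.

Lemma resid0 v k z : defect v k z = 0 -> Y z.1 <> Y z.2 ->
  coefY z.1 *: Z z.1 + coefY z.2 *: Z z.2 = k *: v.
Proof.
move=> + /(diffLabE Ypm z).1 e; rewrite /defect e mul1r => /(ip_eq0 hip)/eqP.
by rewrite subr_eq0 => /eqP.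
Qed.

Lemma defect0_null_section v k (A N : set Omega) : \int[(P \x P)%E]_z defect v k z = 0 ->
  measurable A -> (0 < P A)%E -> measurable N -> P N = 0%E ->
  exists x, [/\ A x, ~ N x & exists N', [/\ measurable N', P N' = 0%E &
    forall y, ~ N' y -> defect v k (x, y) = 0]].
Proof.
move=> h0 mA A0 mN N0.
pose g z := (defect v k z)%:E.
have mg : measurable_fun setT g by apply/measurable_EFinP; exact: (bounded_mfun_defect v k).1.
have g0 z : (0 <= g z)%E by rewrite lee_fin defect_ge0.
pose G := fubini_F P g.
have mG : measurable_fun setT G := @measurable_fun_fubini_tonelli_F _ _ _ _ _ P g mg g0.
have G0 x : (0 <= G x)%E by apply: integral_ge0 => y _; exact: g0.
have iG : (\int[P]_x G x = 0)%E.
  rewrite -(@fubini_tonelli1 _ _ _ _ _ P P g mg g0) /g Rintegral_EFin ?h0 //.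
  exact: integrable_bounded_mfun (probability_setT_lty (P \x P)%E) (bounded_mfun_defect v k).
have [x [Ax Nx Gx]] := integral_eq0_witness G0 mG iG mA A0 mN N0.
have [N' [mN' N'0 gN']] := integral_eq0_null (fun y => g0 (x, y))
  (measurable_fun_pair2 x mg) Gx.
exists x; split => //; exists N'; split => // y nN'; apply: contrapT => hne.
by apply: nN'; apply: gN'; rewrite /g eqe; apply/eqP.
Qed.

Lemma ae_classY_of_defect0 v k : \int[(P \x P)%E]_z defect v k z = 0 ->
  exists cp cm, [/\ ae_classY cp cm, ip cm cm = r ^+ 2 & alpha *: cp - beta *: cm = k *: v].
Proof.
move=> h0; have a0 := alpha_gt0 Ha; have b0 := beta_gt0 Ha.
have [N11 N11'] : (1 : R) <> -1 /\ (-1 : R) <> 1 by split; lra.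
have [w1 [Yw1 _ [N1 [mN1 N10 hN1]]]] := defect0_null_section h0 (measurable_Yeq mY 1)
  (prob_Y1_gt0 Ha) measurable0 (measure0 P).
pose cm := beta^-1 *: (alpha *: Z w1 - k *: v).
have Zcm y : Y y = -1 -> ~ N1 y -> Z y = cm.
  move=> Yy nN; have := resid0 (hN1 y nN); rewrite /= coefY1 // coefYN1 // Yw1 Yy.
  move=> /(_ N11) h; rewrite /cm -h opprD addrA subrr add0r scaleNr opprK scalerA.
  by rewrite mulVf ?scale1r // gt_eqF.
have [w0 [Yw0 nN1w0 [N0 [mN0 N00 hN0]]]] := defect0_null_section h0 (measurable_Yeq mY (-1))
  (prob_Yn1_gt0 Ypm mY Ha) mN1 N10.
have Zw0 := Zcm w0 Yw0 nN1w0.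
pose cp := alpha^-1 *: (beta *: cm + k *: v).
have Zcp y : Y y = 1 -> ~ N0 y -> Z y = cp.
  move=> Yy nN; have := resid0 (hN0 y nN); rewrite /= coefYN1 // coefY1 // Yw0 Yy Zw0.
  move=> /(_ N11') h; rewrite /cp -h addrA scaleNr subrr add0r scalerA.
  by rewrite mulVf ?scale1r // gt_eqF.
exists cp, cm; split.
- exists (N1 `|` N0); split; [exact: measurableU | exact: null_set_setU |].
  move=> w nN; rewrite /classY; case: (Ypm w) => Yw; rewrite Yw.
    by rewrite eqxx Zcp // => ?; apply: nN; right.
  by rewrite eqN11 Zcm // => ?; apply: nN; left.
- by rewrite -Zw0 Zn.
- by rewrite /cp scalerA mulfV ?scale1r ?gt_eqF // addrAC subrr add0r.
Qed.

Lemma defect0_of_ae_classY cp cm v k : ae_classY cp cm ->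
  alpha *: cp - beta *: cm = k *: v -> \int[(P \x P)%E]_z defect v k z = 0.
Proof.
move=> [N [mN N0 ZN]] hv.
apply: (Rintegral_eq0_off_null (probability_setT_lty (P \x P)%E) (bounded_mfun_defect v k)
  (measurable_null_sides mN) (prod_null_sides mN N0)) => z nz.
have [n1 n2] := notin_null_sides nz.
have [eY|nY] := pselect (Y z.1 = Y z.2).
  by rewrite /defect ((sameLabE Ypm z).1 eY) mul0r.
rewrite /defect /resid !ZN // /classY.
case: (Ypm z.1) => e1; case: (Ypm z.2) => e2; rewrite e1 e2 in nY; first [by [] | rewrite e1 e2].
- by rewrite eqxx eqN11 coefY1 // coefYN1 // scaleNr hv subrr (ip0l hip) mulr0.
- by rewrite eqxx eqN11 coefYN1 // coefY1 // scaleNr (addrC (- _)) hv subrr (ip0l hip) mulr0.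
Qed.

End representation.

Section feature_maps.
Context (R : realType) (d : measure_display) (Omega : measurableType d)
  (P : probability Omega R) (n : nat) (X : Omega -> 'rV[R]_n) (Y : Omega -> R)
  (H V : lmodType R) (ip : V -> V -> R) (r : R) (phi : H -> V)
  (F1set : set ('rV[R]_n -> H)).
Hypothesis Ypm : forall w, Y w = 1 \/ Y w = -1.
Hypothesis mY : measurable_fun setT Y.
Hypothesis Ha : (0 < P [set w | Y w = 1%R] < 1)%E.
Hypothesis hip : is_inner_product ip.
Hypothesis r0 : 0 < r.
Hypothesis phi_norm : forall u, ipnorm ip (phi u) = r.
Hypothesis mF1 : forall F1, F1set F1 ->
  (forall v : V, measurable_fun setT (fun w => ip v (phi (F1 (X w))))) /\
  measurable_fun setT (fun z : Omega * Omega => ip (phi (F1 (X z.1))) (phi (F1 (X z.2)))).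

Local Notation alpha := (alpha P Y).
Local Notation beta := (1 - alpha).
Local Notation Z F := (fun w => phi (F (X w))).
Local Notation spreadF F := (spread P Y ip (Z F)).
Local Notation corrF F := (corr P Y ip (Z F)).
Local Notation defectF F := (defect P Y ip (Z F)).
Local Notation D := (Dset P X Y ip phi F1set).
Local Notation S := (Sset P X Y phi F1set).
Local Notation margin := ((alpha - beta) ^+ 2 * r ^+ 2).

Lemma ip_phi F w : ip (Z F w) (Z F w) = r ^+ 2.
Proof. by rewrite -(sqr_ipnorm hip) phi_norm. Qed.

Lemma Dset_objectiveE F : F1set F ->
  condE (P \x P)%E (diffLab Y)
    (fun z => - (ipnorm ip (phi (F (X z.1)) - phi (F (X z.2)))) ^+ 2)
  = (- spreadF F / (2 * alpha * beta))%:E.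
Proof.
by move=> /mF1[_ mZZ]; exact: (condE_neg_sqdist (Z := Z F) P Ypm mY hip (ip_phi F) mZZ).
Qed.

Lemma risk_featureE F w : F1set F ->
  risk P X Y ((fun u => ip w (phi u)) \o F) = (- corrF F w)%:E.
Proof.
by move=> /mF1[mZ _]; exact: (risk_corr (Z := Z F) P Ypm mY hip (ip_phi F) mZ w).
Qed.

Lemma Rintegral_defectF F w k : F1set F -> \int[(P \x P)%E]_z defectF F w k z =
  alpha * beta * (2 * (margin + k ^+ 2 * ip w w) + spreadF F - 4 * k * corrF F w).
Proof.
by move=> /mF1[mZ mZZ]; exact: (Rintegral_defect (Z := Z F) P Ypm mY hip (ip_phi F) mZ mZZ w k).
Qed.

Lemma corr_bound F w k : F1set F ->
  4 * k * corrF F w <= 2 * (margin + k ^+ 2 * ip w w) + spreadF F.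
Proof.
move=> hF; have : 0 <= \int[(P \x P)%E]_z defectF F w k z.
  by apply: Rintegral_ge0 => z _; exact: defect_ge0.
by rewrite Rintegral_defectF // pmulr_rge0 ?(alpha_beta_gt0 Ha) // subr_ge0.
Qed.

Lemma DsetE F : D F <-> F1set F /\ forall F', F1set F' -> spreadF F' <= spreadF F.
Proof.
have c0 : 0 < (2 * alpha * beta)^-1.
  by rewrite invr_gt0 -mulrA mulr_gt0 // (alpha_beta_gt0 Ha).
split => -[hF minF]; split => // F' hF'.
  by have := minF F' hF'; rewrite !Dset_objectiveE // lee_fin ler_pM2r // lerN2.
by rewrite !Dset_objectiveE // lee_fin ler_pM2r // lerN2 minF.
Qed.

Lemma Sset_classY F : S F -> exists cp cm,
  [/\ ae_classY P Y (Z F) cp cm, cp != cm, ip cp cp = r ^+ 2 & ip cm cm = r ^+ 2].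
Proof.
move=> [hF [same1 diff1]]; have [_ mZZ] := mF1 hF.
have [cp [cm [hc hp hm]]] :=
  ae_classY_of_condP_eqZ (Z := Z F) Ypm mY Ha hip (ip_phi F) mZZ same1.
exists cp, cm; split => //; apply/eqP => cpm; rewrite cpm in hc.
have diff0 : condP (P \x P)%E [set z | phi (F (X z.1)) <> phi (F (X z.2))] (diffLab Y) = 0%E
  := condP_neqZ_diffLab_cst (Z := Z F) Ypm mY hip (ip_phi F) mZZ hc.
by rewrite diff0 in diff1; case: diff1 => /eqP; rewrite eq_sym oner_eq0.
Qed.

Lemma Sset_of_classY F cp cm : F1set F -> ae_classY P Y (Z F) cp cm -> cp != cm -> S F.
Proof.
move=> hF hc cpm; have [_ mZZ] := mF1 hF; split; [by [] | split].
  exact: (condP_eqZ_sameLab (Z := Z F) Ypm mY Ha hip (ip_phi F) mZZ hc).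
exact: (condP_neqZ_diffLab (Z := Z F) Ypm mY Ha hip (ip_phi F) mZZ hc).
Qed.

Lemma Sset_of_defect0 F w k : F1set F -> \int[(P \x P)%E]_z defectF F w k z = 0 ->
  margin < k ^+ 2 * ip w w -> S F.
Proof.
move=> hF h0 gap; have [mZ mZZ] := mF1 hF.
have [cp [cm [hc hm hv]]] :=
  ae_classY_of_defect0 (Z := Z F) Ypm mY Ha hip (ip_phi F) mZ mZZ h0.
apply: Sset_of_classY hF hc _; apply/eqP => cpm; rewrite cpm -scalerBl in hv.
have := congr1 (fun u => ip u u) hv; rewrite /= !(ipE hip) hm => e.
by move: gap; rewrite !expr2; nra.
Qed.

(* The witness [w0 = k0^-1 (alpha cp - beta cm)] makes the defect vanish,
   so the bound [corr_bound] is attained. *)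
Lemma Sset_attains_corr_bound F : S F -> exists w0 k0,
  [/\ ip w0 w0 = (r ^+ 2)^-1, 0 < k0, margin < k0 ^+ 2 * ip w0 w0 &
      4 * k0 * corrF F w0 = 2 * (margin + k0 ^+ 2 * ip w0 w0) + spreadF F].
Proof.
move=> SF; have hF : F1set F by case: SF.
have [mZ mZZ] := mF1 hF.
have [cp [cm [hc cpm hp hm]]] := Sset_classY SF.
have a0 := alpha_gt0 Ha; have b0 := beta_gt0 Ha.
pose v0 := alpha *: cp - beta *: cm.
have gap : margin < ip v0 v0 := ip_combination_gt hip hp hm cpm a0 b0.
have v0_gt0 : 0 < ip v0 v0 by apply: le_lt_trans gap; rewrite mulr_ge0 ?sqr_ge0.
pose s := Num.sqrt (ip v0 v0).
have s_gt0 : 0 < s by rewrite sqrtr_gt0.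
have s2 : s ^+ 2 = ip v0 v0 by rewrite sqr_sqrtr // ltW.
pose k0 := r * s.
have k0_gt0 : 0 < k0 by rewrite mulr_gt0.
pose w0 := k0^-1 *: v0.
have kw : alpha *: cp - beta *: cm = k0 *: w0.
  by rewrite /w0 scalerA mulfV ?gt_eqF // scale1r.
have ww : ip w0 w0 = (r ^+ 2)^-1.
  by rewrite /w0 (ipZl hip) (ipZr hip) -s2 /k0; field; rewrite !gt_eqF.
have kww : k0 ^+ 2 * ip w0 w0 = ip v0 v0.
  by rewrite ww /k0 -s2; field; rewrite gt_eqF.
exists w0, k0; split; rewrite ?kww //.
have := defect0_of_ae_classY (Z := Z F) Ypm mY hip (ip_phi F) mZ mZZ hc kw.
rewrite Rintegral_defectF // kww => /eqP; rewrite mulf_eq0 gt_eqF ?(alpha_beta_gt0 Ha) //=.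
by rewrite subr_eq0 => /eqP ->.
Qed.

Lemma corr_le_attained F1 w0 k0 F w : D F1 -> ip w0 w0 = (r ^+ 2)^-1 -> 0 < k0 ->
  4 * k0 * corrF F1 w0 = 2 * (margin + k0 ^+ 2 * ip w0 w0) + spreadF F1 ->
  F1set F -> ip w w <= (r ^+ 2)^-1 -> corrF F w <= corrF F1 w0.
Proof.
move=> /DsetE[_ maxF1] ww k0_gt0 eq1 hF hw.
have bound := corr_bound w k0 hF; have le_spread := maxF1 F hF.
have lew : k0 ^+ 2 * ip w w <= k0 ^+ 2 * ip w0 w0 by rewrite ww ler_wpM2l ?sqr_ge0.
by rewrite -(ler_pM2l (_ : 0 < 4 * k0)) ?mulr_gt0 //; lra.
Qed.

Lemma F2set_ipE f2 : F2set ip phi r f2 <->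
  exists w, ip w w <= (r ^+ 2)^-1 /\ f2 = (fun u => ip w (phi u)).
Proof. by split => -[w [hw ->]]; exists w; rewrite (ipnorm_le_inv _ _ r0) in hw *. Qed.

Lemma DS_sub_F1star F : D F -> S F -> F1star P X Y ip phi r F1set F.
Proof.
move=> DF SF; have hF : F1set F by case: SF.
have [w0 [k0 [ww k0_gt0 _ eq0]]] := Sset_attains_corr_bound SF.
have w0F2 : F2set ip phi r (fun u => ip w0 (phi u)).
  by apply/F2set_ipE; exists w0; rewrite ww.
split => //; exists (fun u => ip w0 (phi u)); split => //; split.
  by exists (fun u => ip w0 (phi u)), F.
move=> f2' F' /F2set_ipE[w' [hw' ->]] hF'.
rewrite !risk_featureE // lee_fin lerN2.
exact: corr_le_attained DF ww k0_gt0 eq0 hF' hw'.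
Qed.

Lemma F1star_sub_DS F0 F : D F0 -> S F0 -> F1star P X Y ip phi r F1set F -> D F /\ S F.
Proof.
move=> DF0 SF0 [hF [f2 [/F2set_ipE[w [hw ->]] [_ minF]]]].
have hF0 : F1set F0 by case: SF0.
have [w0 [k0 [ww k0_gt0 gap eq0]]] := Sset_attains_corr_bound SF0.
have w0F2 : F2set ip phi r (fun u => ip w0 (phi u)).
  by apply/F2set_ipE; exists w0; rewrite ww.
have := minF _ _ w0F2 hF0; rewrite !risk_featureE // lee_fin lerN2 => le0.
have bound := corr_bound w k0 hF.
have [_ maxF0] := (DsetE F0).1 DF0.
have le_spread := maxF0 F hF.
have lew : k0 ^+ 2 * ip w w <= k0 ^+ 2 * ip w0 w0 by rewrite ww ler_wpM2l ?sqr_ge0.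
have le0' : k0 * corrF F0 w0 <= k0 * corrF F w by rewrite ler_pM2l.
have spreadE : spreadF F0 = spreadF F by lra.
split.
  by apply/DsetE; split => // F' hF'; rewrite -spreadE; exact: maxF0.
apply: (Sset_of_defect0 (w := w) (k := k0)) => //; last by lra.
rewrite Rintegral_defectF //.
have -> : 2 * (margin + k0 ^+ 2 * ip w w) + spreadF F - 4 * k0 * corrF F w = 0 by lra.
by rewrite mulr0.
Qed.

End feature_maps.

Theorem theorem1 (R : realType) (d : measure_display) (Omega : measurableType d)
  (P : probability Omega R) (n : nat) (Xs : set 'rV[R]_n)
  (X : Omega -> 'rV[R]_n) (Y : Omega -> R)
  (H V : lmodType R) (ipH : H -> H -> R) (ipV : V -> V -> R)
  (r : R) (phi : H -> V) (F1set : set ('rV[R]_n -> H)) :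
  is_inner_product ipH ->
  is_inner_product ipV ->
  (forall w, Xs (X w)) ->
  (forall w, Y w = 1 \/ Y w = -1) ->
  measurable_fun setT Y ->
  (0 < P [set w | Y w = 1%R] < 1)%E ->
  0 < r ->
  (forall u, ipnorm ipV (phi u) = r) ->
  (forall F1, F1set F1 ->
     (forall v : V, measurable_fun setT (fun w => ipV v (phi (F1 (X w))))) /\
     measurable_fun setT
       (fun z : Omega * Omega => ipV (phi (F1 (X z.1))) (phi (F1 (X z.2))))) ->
  Dset P X Y ipV phi F1set `&` Sset P X Y phi F1set !=set0 ->
  (forall F1, F1set F1 -> ~ Sset P X Y phi F1set F1 ->
     card_gt4 (ip_support P ipV (phi \o F1 \o X))) ->
  F1star P X Y ipV phi r F1set = Dset P X Y ipV phi F1set `&` Sset P X Y phi F1set.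
Proof.
move=> _ hipV _ Ypm mY Ha r0 phi_norm mF1 [F0 [DF0 SF0]] _.
apply/seteqP; split => F.
  exact: (F1star_sub_DS Ypm mY Ha hipV r0 phi_norm mF1 DF0 SF0).
by move=> [DF SF]; exact: (DS_sub_F1star Ypm mY Ha hipV r0 phi_norm mF1 DF SF).
Qed.
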